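(* Let $(X,\mathrm{dist})$ be a metric space, let $d\in\mathbb{N}$ and $\eta>0$. Suppose $\{f_i\}_{i\in I}$ is a partition of unity for $X$ such that (1) for any subset $F\subseteq I$ of cardinality greater than $d+1$, $\prod_{i\in F}f_i=0$; and (2) each $f_i$ is Lipschitz with constant $\eta$. Then for any $r\in\big[0,\frac{1}{\eta(d+1)}\big)$ there is a partition of unity $\{g_i\}_{i\in I}$ for $X$ such that (3) for any $i\in I$, $N_r(\mathrm{supp}(g_i))\subseteq\mathrm{supp}(f_i)^{o}$; and (4) each $g_i$ is Lipschitz with constant $\dfrac{(d+2)\eta}{(1-(d+1)\eta r)^2}$.
   Context: A partition of unity for $X$ is a family of continuous functions $f_i\colon X\to[0,\infty)$ whose supports are contained in a locally finite family of open sets and with $\sum_i f_i(x)=1$ for all $x\in X$. $\mathrm{supp}$ is the closed support, $S^{o}$ the interior of $S$, and $N_r(S)=\{x\in X:\mathrm{dist}(x,S)<r\}$. *)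

From HB Require Import structures.
From mathcomp Require Import all_boot all_order all_algebra.
From mathcomp Require Import reals.
From Stdlib Require List.
Set Implicit Arguments. Unset Strict Implicit. Unset Printing Implicit Defensive.
Import Order.TTheory GRing.Theory Num.Theory.
Local Open Scope ring_scope.

Section MetricDefs.
Variables (R : realType) (X : Type) (dist : X -> X -> R).

Definition is_metric : Prop :=
  [/\ (forall x y, 0 <= dist x y),
      (forall x y, dist x y = 0 <-> x = y),
      (forall x y, dist x y = dist y x) &
      (forall x y z, dist x z <= dist x y + dist y z)].

Definition mopen (U : X -> Prop) : Prop :=
  forall x, U x -> exists2 e : R, 0 < e & forall y, dist x y < e -> U y.

Definition mclosure (A : X -> Prop) : X -> Prop :=
  fun x => forall e : R, 0 < e -> exists y, A y /\ dist x y < e.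

Definition minterior (S : X -> Prop) : X -> Prop :=
  fun x => exists2 e : R, 0 < e & forall y, dist x y < e -> S y.

Definition supp (f : X -> R) : X -> Prop := mclosure (fun x => f x <> 0).

(* N_r(S) = {x : dist(x,S) < r}; dist(x,S) = inf_{y in S} dist x y < r
   iff some y in S has dist x y < r *)
Definition Nbhd (r : R) (S : X -> Prop) : X -> Prop :=
  fun x => exists y, S y /\ dist x y < r.

Definition mcontinuous (f : X -> R) : Prop :=
  forall x (e : R), 0 < e -> exists2 del : R, 0 < del &
    forall y, dist x y < del -> `|f x - f y| < e.

Definition lipschitz (L : R) (f : X -> R) : Prop :=
  forall x y, `|f x - f y| <= L * dist x y.

Definition locally_finite (Idx : Type) (U : Idx -> X -> Prop) : Prop :=
  forall x, exists2 e : R, 0 < e & exists s : seq Idx,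
    forall i, (exists y, dist x y < e /\ U i y) -> List.In i s.

(* partition of unity: nonnegative continuous functions whose supports are
   contained in a locally finite family of open sets, summing to 1 at every
   point (the sum at x is the finite sum over the indices with f_i x <> 0) *)
Definition partition_of_unity (Idx : Type) (f : Idx -> X -> R) : Prop :=
  [/\ (forall i x, 0 <= f i x),
      (forall i, mcontinuous (f i)),
      (exists U : Idx -> X -> Prop,
         [/\ (forall i, mopen (U i)),
             (forall i x, supp (f i) x -> U i x) &
             locally_finite U]) &
      (forall x, exists s : seq Idx,
         [/\ List.NoDup s, (forall i, f i x <> 0 -> List.In i s) &
             \sum_(i <- s) f i x = 1])].

End MetricDefs.

(* Put c = eta r and h_i = max (f_i - c, 0).  Each h_i is eta-Lipschitz and
   nonzero only where f_i > c.  At each point at most d+1 of the f_i are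
   nonzero, so D = sum_i h_i is at least 1 - (d+1) c and is (d+1) eta-Lipschitz.
   Hence g_i = h_i / D is a partition of unity whose Lipschitz constant is at
   most (d+2) eta / (1 - (d+1) c) by the quotient rule.  Finally f_i > c
   wherever g_i <> 0 and f_i varies by less than eta r = c over distances < r,
   so f_i > 0 on the open set N_r (supp g_i). *)

From mathcomp Require Import all_boot all_order all_algebra.
From mathcomp Require Import reals.
From Stdlib Require List.
From Stdlib Require Import ClassicalEpsilon.
From mathcomp Require Import ring lra.
Import Order.TTheory GRing.Theory Num.Theory.
Set Implicit Arguments. Unset Strict Implicit.
Local Open Scope ring_scope.

Section NonzeroSums.
Variables (R : numDomainType) (I : Type).

Lemma filter_List (p : pred I) (s : seq I) : filter p s = List.filter p s.
Proof. by elim: s => //= a s ->. Qed.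

Lemma sumr_le_cover (u : I -> R) (s t : seq I) :
  (forall i, 0 <= u i) -> List.NoDup s ->
  (forall i, List.In i s -> u i != 0 -> List.In i t) ->
  \sum_(i <- s) u i <= \sum_(i <- t) u i.
Proof.
move=> u_ge0; elim: s t => [|a s IH] t; first by rewrite big_nil sumr_ge0.
move=> /List.NoDup_cons_iff [a_notin_s s_uniq] s_sub_t; rewrite big_cons.
have [ua0|ua_neq0] := eqVneq (u a) 0.
  by rewrite ua0 add0r; apply: IH => // i si; apply: s_sub_t; right.
have [t1 [t2 t_eq]] := List.in_split _ _ (s_sub_t a (or_introl erefl) ua_neq0).
subst t.
rewrite big_cat big_cons /= addrCA lerD2l -big_cat; apply: IH => // i si ui.
have := s_sub_t i (or_intror si) ui; rewrite !List.in_app_iff /=.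
by case=> [|[ai|]]; [left | subst a | right].
Qed.

Lemma sumr_le_size_filter (p : pred I) (w : I -> R) (B : R) (s : seq I) :
  (forall i, p i -> w i <= B) -> (forall i, ~~ p i -> w i <= 0) ->
  \sum_(i <- s) w i <= B * (size (filter p s))%:R.
Proof.
move=> w_le_B w_le0; elim: s => [|a s IH]; first by rewrite big_nil mulr0.
rewrite big_cons /=; case: (boolP (p a)) => pa /=.
  by rewrite -addn1 natrD mulrDr mulr1 addrC lerD // w_le_B.
by rewrite -[X in _ <= X]add0r lerD // w_le0.
Qed.

End NonzeroSums.

Lemma size_nonzero_le (R : idomainType) (I : Type) (u : I -> R) (d : nat) (s : seq I) :
  (forall F : seq I, List.NoDup F -> (d.+1 < size F)%N -> \prod_(i <- F) u i = 0) ->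
  List.NoDup s -> (size [seq i <- s | u i != 0%R] <= d.+1)%N.
Proof.
move=> u_order s_uniq; rewrite leqNgt; apply/negP => /u_order.
rewrite filter_List; move/(_ (List.NoDup_filter _ s_uniq))/eqP.
rewrite -filter_List big_filter; apply/negP; rewrite prodf_seq_neq0.
by elim: (s) => //= a t ->; rewrite implybb.
Qed.

Section LipschitzFunctions.
Variables (R : realType) (X : Type) (dist : X -> X -> R).

Lemma lipschitz_mcontinuous (L : R) (g : X -> R) :
  0 < L -> lipschitz dist L g -> mcontinuous dist g.
Proof.
move=> L_gt0 g_lip x e e_gt0; exists (e / L); first exact: divr_gt0.
by move=> y; rewrite ltr_pdivlMr // mulrC => /(le_lt_trans (g_lip x y)).
Qed.

Lemma lipschitz_le (L L' : R) (g : X -> R) : (forall x y, 0 <= dist x y) ->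
  lipschitz dist L g -> L <= L' -> lipschitz dist L' g.
Proof.
by move=> dist_ge0 g_lip le_LL' x y; rewrite (le_trans (g_lip x y)) ?ler_wpM2r.
Qed.

Lemma lipschitz_truncate (L c : R) (g : X -> R) :
  lipschitz dist L g -> lipschitz dist L (fun x => Num.max (g x - c) 0).
Proof.
move=> g_lip x y; apply: le_trans (g_lip x y).
have := ler_norm (g x - g y); have := ler_norm (g y - g x); rewrite (distrC (g y)).
have [hx|hx] := lerP (g x - c) 0; have [hy|hy] := lerP (g y - c) 0;
  rewrite ?(max_r hx) ?(max_l (ltW hx)) ?(max_r hy) ?(max_l (ltW hy)) ler_norml; lra.
Qed.

Lemma lipschitz_gt0 (L : R) (g : X -> R) (x y : X) :
  lipschitz dist L g -> L * dist x y < g y -> 0 < g x.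
Proof. by move=> /(_ x y); rewrite ler_norml => /andP[]; lra. Qed.

Lemma lipschitz_div (Lh LD m : R) (h D : X -> R) :
  0 < m -> (forall x, m <= D x) -> (forall x, 0 <= h x <= D x) ->
  lipschitz dist Lh h -> lipschitz dist LD D ->
  lipschitz dist ((Lh + LD) / m) (fun x => h x / D x).
Proof.
move=> m_gt0 m_le_D h_bounds h_lip D_lip x y.
have D_gt0 z : 0 < D z by exact: lt_le_trans (m_le_D z).
pose t := h y / D y.
have /andP[t_ge0 t_le1] : 0 <= t <= 1.
  case/andP: (h_bounds y) => hy_ge0 hy_le.
  by rewrite divr_ge0 ?(ltW (D_gt0 y)) // ler_pdivrMr // mul1r.
have -> : h x / D x - h y / D y = (h x - h y + t * (D y - D x)) / D x.
  by rewrite /t; field; rewrite !gt_eqF.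
have num_le : `|h x - h y + t * (D y - D x)| <= (Lh + LD) * dist x y.
  rewrite (le_trans (ler_normD _ _)) // normrM (ger0_norm t_ge0) (distrC (D y)) mulrDl.
  by rewrite lerD // (le_trans _ (D_lip x y)) // ler_piMl.
rewrite normrM normfV (gtr0_norm (D_gt0 x)) ler_pdivrMr //; apply: (le_trans num_le).
have -> : (Lh + LD) / m * dist x y * D x = (Lh + LD) * dist x y * (D x / m).
  by field; rewrite gt_eqF.
rewrite ler_peMr ?ler_pdivlMr ?mul1r //.
exact: le_trans (normr_ge0 _) num_le.
Qed.

End LipschitzFunctions.

Section MetricSets.
Variables (R : realType) (X : Type) (dist : X -> X -> R).

Lemma mclosure_sub (A B : X -> Prop) (x : X) :
  (forall y, A y -> B y) -> mclosure dist A x -> mclosure dist B x.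
Proof. by move=> AB Ax e /Ax[y [/AB By dxy]]; exists y. Qed.

Lemma minterior_sub (S T : X -> Prop) (x : X) :
  (forall y, S y -> T y) -> minterior dist S x -> minterior dist T x.
Proof. by move=> ST [e e_gt0 Sx]; exists e => // y /Sx /ST. Qed.

Hypothesis dist_metric : is_metric dist.

Lemma mclosure_id (A : X -> Prop) (x : X) : A x -> mclosure dist A x.
Proof.
by case: dist_metric => _ dist_eq0 _ _ Ax e e_gt0; exists x; rewrite (proj2 (dist_eq0 x x)).
Qed.

Lemma Nbhd_mclosure_minterior (r : R) (A : X -> Prop) (x : X) :
  Nbhd dist r (mclosure dist A) x -> minterior dist (Nbhd dist r A) x.
Proof.
case: dist_metric => _ _ dist_sym dist_tri [y [Ay dxy]].
have e_gt0 : 0 < (r - dist x y) / 2 by rewrite divr_gt0 //; lra.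
have [w [Aw dyw]] := Ay _ e_gt0.
exists ((r - dist x y) / 2) => // z dxz; exists w; split => //.
by move: (dist_tri z x w) (dist_tri x y w) (dist_sym z x); lra.
Qed.

End MetricSets.

Section Refinement.
Variables (R : realType) (X : Type) (dist : X -> X -> R) (Idx : Type).
Variables (f : Idx -> X -> R) (s : X -> seq Idx) (d : nat) (eta c : R).

Hypothesis dist_metric : is_metric dist.
(* [s x] enumerates the indices i with f i x <> 0 (plus possibly others); sums
   over I at x are taken along [s x]. *)
Hypothesis s_uniq : forall x, List.NoDup (s x).
Hypothesis s_cover : forall x i, f i x <> 0 -> List.In i (s x).
Hypothesis s_sum1 : forall x, \sum_(i <- s x) f i x = 1.
Hypothesis f_sparse : forall x, (size [seq i <- s x | f i x != 0%R] <= d.+1)%N.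
Hypothesis f_lip : forall i, lipschitz dist eta (f i).
Hypothesis eta_gt0 : 0 < eta.
Hypothesis c_ge0 : 0 <= c.
Hypothesis c_small : d.+1%:R * c < 1.

Definition trunc (i : Idx) (x : X) : R := Num.max (f i x - c) 0.

Definition mass (x : X) : R := \sum_(i <- s x) trunc i x.

Definition refined (i : Idx) (x : X) : R := trunc i x / mass x.

Lemma trunc_ge0 i x : 0 <= trunc i x.
Proof. by rewrite /trunc le_max lexx orbT. Qed.

Lemma trunc_neq0_gt i x : trunc i x != 0 -> c < f i x.
Proof.
by rewrite /trunc; case: (lerP (f i x - c) 0); rewrite ?eqxx // subr_gt0.
Qed.

Lemma trunc_neq0 i x : trunc i x != 0 -> f i x != 0.
Proof. by move/trunc_neq0_gt/(le_lt_trans c_ge0)/gt_eqF ->. Qed.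

Lemma mass_ge x : 1 - d.+1%:R * c <= mass x.
Proof.
have defect_le : \sum_(i <- s x) (f i x - trunc i x)
    <= c * (size [seq i <- s x | f i x != 0])%:R.
  apply: sumr_le_size_filter => i.
    move=> _; have : f i x - c <= trunc i x by rewrite /trunc le_max lexx.
    lra.
  by move=> /negPn/eqP ->; rewrite sub0r oppr_le0 trunc_ge0.
rewrite sumrB s_sum1 in defect_le.
have : c * (size [seq i <- s x | f i x != 0])%:R <= d.+1%:R * c.
  by rewrite mulrC ler_wpM2r // ler_nat.
rewrite /mass; lra.
Qed.

Lemma mass_gt0 x : 0 < mass x.
Proof. by apply: lt_le_trans (mass_ge x); rewrite subr_gt0. Qed.

Lemma trunc_le_mass i x : trunc i x <= mass x.
Proof.
have := @sumr_le_cover _ _ (trunc^~ x) [:: i] (s x); rewrite big_seq1; apply.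
- by move=> j; exact: trunc_ge0.
- by apply: List.NoDup_cons => //; exact: List.NoDup_nil.
- by move=> j [<-|//] /trunc_neq0 /eqP; apply: s_cover.
Qed.

Lemma trunc_lipschitz i : lipschitz dist eta (trunc i).
Proof. exact: lipschitz_truncate. Qed.

Lemma mass_sub_le x y : mass x - mass y <= d.+1%:R * eta * dist x y.
Proof.
case: dist_metric => dist_ge0 _ _ _.
have sum_le_mass : \sum_(i <- s x) trunc i y <= mass y.
  apply: sumr_le_cover => [i||i _ /trunc_neq0/eqP]; first exact: trunc_ge0.
    exact: s_uniq.
  exact: s_cover.
have incr_le : \sum_(i <- s x) (trunc i x - trunc i y)
    <= eta * dist x y * (size [seq i <- s x | f i x != 0])%:R.
  apply: sumr_le_size_filter => i.
    by move=> _; exact: le_trans (ler_norm _) (trunc_lipschitz i x y).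
  move=> /negPn fi_eq0; have -> : trunc i x = 0.
    by apply/eqP; apply: contraTT fi_eq0 => /trunc_neq0.
  by rewrite sub0r oppr_le0 trunc_ge0.
rewrite sumrB in incr_le.
have : eta * dist x y * (size [seq i <- s x | f i x != 0])%:R <= d.+1%:R * eta * dist x y.
  by rewrite mulrC mulrA ler_wpM2r ?ler_wpM2r ?ler_nat ?(ltW eta_gt0).
rewrite /mass in sum_le_mass incr_le *; lra.
Qed.

Lemma mass_lipschitz : lipschitz dist (d.+1%:R * eta) mass.
Proof.
case: dist_metric => _ _ dist_sym _ x y.
by rewrite ler_norml -lerNl opprB {1}dist_sym !mass_sub_le.
Qed.

Lemma refined_lipschitz i :
  lipschitz dist (d.+2%:R * eta / (1 - d.+1%:R * c)) (refined i).
Proof.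
have -> : d.+2%:R * eta = eta + d.+1%:R * eta.
  by rewrite -addn1 natrD mulrDl mul1r addrC.
apply: lipschitz_div (trunc_lipschitz i) mass_lipschitz.
- by rewrite subr_gt0.
- exact: mass_ge.
- by move=> x; rewrite trunc_ge0 trunc_le_mass.
Qed.

Lemma refined_neq0 i x : refined i x != 0 -> trunc i x != 0.
Proof. by apply: contra_neq; rewrite /refined => ->; rewrite mul0r. Qed.

Lemma refined_partition_of_unity :
  partition_of_unity dist f -> partition_of_unity dist refined.
Proof.
case=> _ _ [U [U_open U_supp U_lf]] _; split.
- by move=> i x; rewrite divr_ge0 ?trunc_ge0 ?ltW ?mass_gt0.
- move=> i; apply: lipschitz_mcontinuous (refined_lipschitz i).
  by rewrite divr_gt0 ?mulr_gt0 ?subr_gt0.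
- exists U; split => // i x supp_x; apply: U_supp; apply: mclosure_sub supp_x.
  by move=> y /eqP/refined_neq0/trunc_neq0/eqP.
- move=> x; exists (s x); split => //.
    by move=> i /eqP/refined_neq0/trunc_neq0/eqP; exact: s_cover.
  by rewrite -mulr_suml divff // gt_eqF // mass_gt0.
Qed.

Lemma Nbhd_supp_refined i x (r : R) : eta * r <= c ->
  Nbhd dist r (supp dist (refined i)) x -> minterior dist (supp dist (f i)) x.
Proof.
move=> le_c /(Nbhd_mclosure_minterior dist_metric); apply: minterior_sub.
move=> z [w [/eqP/refined_neq0/trunc_neq0_gt fw_gt dzw]].
apply: (mclosure_id dist_metric); apply/eqP; rewrite gt_eqF //.
apply: lipschitz_gt0 (f_lip i) _; apply: le_lt_trans fw_gt.
by rewrite (le_trans _ le_c) // ler_wpM2l // ltW.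
Qed.

End Refinement.

Lemma ler_pdivr_expr2 (R : realFieldType) (k b : R) :
  0 <= k -> 0 < b -> b <= 1 -> k / b <= k / b ^+ 2.
Proof.
move=> k_ge0 b_gt0 b_le1; apply: ler_wpM2l => //.
by rewrite lef_pV2 ?posrE ?exprn_gt0 // expr2 ler_piMl // ltW.
Qed.

Theorem lemma4p5 (R : realType) (X : Type) (dist : X -> X -> R)
  (Idx : Type) (f : Idx -> X -> R) (d : nat) (eta : R) :
  is_metric dist ->
  0 < eta ->
  partition_of_unity dist f ->
  (forall (F : seq Idx) (x : X), List.NoDup F -> (d.+1 < size F)%N ->
      \prod_(i <- F) f i x = 0) ->
  (forall i, lipschitz dist eta (f i)) ->
  forall r : R, 0 <= r -> r < 1 / (eta * d.+1%:R) ->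
  exists g : Idx -> X -> R,
    [/\ partition_of_unity dist g,
        (forall i x, Nbhd dist r (supp dist (g i)) x ->
                     minterior dist (supp dist (f i)) x) &
        (forall i, lipschitz dist
            ((d.+2)%:R * eta / (1 - d.+1%:R * eta * r) ^+ 2) (g i))].
Proof.
move=> dist_metric eta_gt0 f_pu f_order f_lip r r_ge0 r_lt.
have [dist_ge0 _ _ _] := dist_metric.
case: (f_pu) => _ _ _ /choice[s /all_and3[s_uniq s_cover s_sum1]].
have f_sparse x := size_nonzero_le (f_order^~ x) (s_uniq x).
have c_ge0 : 0 <= eta * r by rewrite mulr_ge0 // ltW.
have c_small : d.+1%:R * (eta * r) < 1.
  have -> : d.+1%:R * (eta * r) = r * (eta * d.+1%:R) by ring.
  by rewrite -ltr_pdivlMr ?mulr_gt0.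
exists (refined f s (eta * r)); split.
- exact: refined_partition_of_unity.
- by move=> i x; apply: Nbhd_supp_refined.
- move=> i; apply: (lipschitz_le dist_ge0 (refined_lipschitz dist_metric s_uniq
    s_cover s_sum1 f_sparse f_lip eta_gt0 c_ge0 c_small i)).
  have dc_ge0 : 0 <= d.+1%:R * (eta * r) by rewrite mulr_ge0.
  rewrite -[d.+1%:R * eta * r]mulrA.
  by apply: ler_pdivr_expr2; [rewrite mulr_ge0 ?ltW | lra | lra].
Qed.
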